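(* Let $J\ge2$ be an integer. For $x\in\mathbb R^J$ put $x_{J+1}:=x_1$, $\min x:=\min\{x_1,\dots,x_J\}$, $\max x:=\max\{x_1,\dots,x_J\}$. Then $$\max_{\substack{x\in\mathbb R^J\setminus\{0\}\\ \min x\le0\le\max x}}\frac{|x|^2}{\sum_{j=1}^J(x_{j+1}-x_j)^2}=\max_{y\in\mathbb R^J\setminus\{0\}}\frac{|y|^2}{\sum_{j=1}^J(y_{j+1}-y_j)^2+(y_1+y_J)^2}=\frac{1}{2(1-\cos(\pi/J))},$$ where also $y_{J+1}:=y_1$.
   Context: $|x|$ denotes the Euclidean norm. *)

From Stdlib Require Import Reals Lra Lia.
Open Scope R_scope.

(* A vector x in R^J is represented by x : nat -> R, using the entries
   x 0, ..., x (J-1) (0-based: x_j of the paper is x (j-1)).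
   Entries with index >= J are ignored by every definition below. *)

Fixpoint rsum (n : nat) (f : nat -> R) : R :=
  match n with
  | O => 0
  | S m => rsum m f + f m
  end.

Definition sqnorm (J : nat) (x : nat -> R) : R := rsum J (fun j => (x j)^2).

Definition cyc_energy (J : nat) (x : nat -> R) : R :=
  rsum J (fun j => (x ((j + 1) mod J)%nat - x j)^2).

Definition nonzero_vec (J : nat) (x : nat -> R) : Prop :=
  exists j, (j < J)%nat /\ x j <> 0.

Definition min_le0_le_max (J : nat) (x : nat -> R) : Prop :=
  (exists j, (j < J)%nat /\ x j <= 0) /\ (exists j, (j < J)%nat /\ 0 <= x j).

Definition is_max_over (P : (nat -> R) -> Prop) (f : (nat -> R) -> R) (m : R) : Prop :=
  (exists x, P x /\ f x = m) /\ (forall x, P x -> f x <= m).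

From Stdlib Require Import Reals Lra Lia Psatz.
Open Scope R_scope.

(* Write λ = 2 (1 - cos (π/J)) and extend vectors antiperiodically, y_{J+1} = -y_1.
   The energy of that extension, Σ_{j<J} (y_{j+1} - y_j)^2 + (y_1 + y_J)^2, is at
   least λ |y|^2: a Picone-type induction along the path 1..J, weighted by the
   Dirichlet eigenvector sin(jπ/J), bounds the path part from below by a quadratic
   form in the endpoint values y_1, y_J, which the wrap-around term makes
   nonnegative.
   The second denominator exceeds the antiperiodic energy by (y_1 - y_J)^2, and so
   does the first one, by -4 x_1 x_J, once x is rotated so that x_J <= 0 <= x_1.
   Equality: the sequences sin(jπ/J + φ) are antiperiodic eigenvectors with
   eigenvalue λ; φ = 0 gives x_1 = 0, φ = π/(2J) gives y_1 = y_J. *)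

Lemma rsum_ext n f g : (forall i, (i < n)%nat -> f i = g i) -> rsum n f = rsum n g.
Proof.
  induction n as [|n IH]; intros Hfg; simpl; [reflexivity|].
  rewrite IH by (intros; apply Hfg; lia). rewrite Hfg by lia. reflexivity.
Qed.

Lemma rsum_shift n f : rsum n (fun i => f (S i)) = rsum n f - f 0%nat + f n.
Proof. induction n as [|n IH]; simpl; [ring|]. rewrite IH. ring. Qed.

Lemma rsum_rotate J f m : (J <> 0)%nat ->
  rsum J (fun i => f ((i + m) mod J)%nat) = rsum J f.
Proof.
  intros HJ. induction m as [|m IH].
  - apply rsum_ext. intros i Hi. rewrite Nat.add_0_r, Nat.mod_small; auto.
  - rewrite <- IH.
    transitivity (rsum J (fun i => f ((S i + m) mod J)%nat)).
    { apply rsum_ext. intros i _. do 2 f_equal. lia. }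
    rewrite (rsum_shift J (fun i => f ((i + m) mod J)%nat)).
    replace (J + m)%nat with (m + 1 * J)%nat by lia.
    rewrite Nat.Div0.mod_add. simpl. ring.
Qed.

Lemma rsum_nonneg n f : (forall i, 0 <= f i) -> 0 <= rsum n f.
Proof.
  intros Hf. induction n as [|n IH]; simpl; [lra|].
  specialize (Hf n). lra.
Qed.

Lemma rsum_ge_term n f j : (forall i, 0 <= f i) -> (j < n)%nat -> f j <= rsum n f.
Proof.
  intros Hf. induction n as [|n IH]; intros Hj; [lia|]. simpl.
  pose proof (rsum_nonneg n f Hf). pose proof (Hf n).
  destruct (Nat.eq_dec j n) as [-> | Hjn]; [lra|].
  specialize (IH ltac:(lia)). lra.
Qed.

Lemma sqnorm_pos J x : nonzero_vec J x -> 0 < sqnorm J x.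
Proof.
  intros [j [Hj Hxj]].
  assert (Hle : x j ^ 2 <= sqnorm J x).
  { apply (rsum_ge_term J (fun j => x j ^ 2)); auto. intros; apply pow2_ge_0. }
  assert (0 < x j ^ 2) by nra. lra.
Qed.

Lemma sqnorm_rotate J x m : (J <> 0)%nat ->
  sqnorm J (fun i => x ((i + m) mod J)%nat) = sqnorm J x.
Proof. intros HJ. exact (rsum_rotate J (fun i => x i ^ 2) m HJ). Qed.

Lemma cyc_energy_rotate J x m : (J <> 0)%nat ->
  cyc_energy J (fun i => x ((i + m) mod J)%nat) = cyc_energy J x.
Proof.
  intros HJ. unfold cyc_energy.
  rewrite <- (rsum_rotate J (fun i => (x ((i + 1) mod J)%nat - x i) ^ 2) m HJ).
  apply rsum_ext. intros i _.
  rewrite !Nat.Div0.add_mod_idemp_l.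
  replace (i + 1 + m)%nat with (i + m + 1)%nat by lia. reflexivity.
Qed.

Lemma sign_change_exists J x : min_le0_le_max J x ->
  exists k, (k < J)%nat /\ x k <= 0 /\ 0 <= x ((k + 1) mod J)%nat.
Proof.
  intros [[a [Ha Hxa]] [b [Hb Hxb]]].
  set (crossing := exists k, (k < J)%nat /\ x k <= 0 /\ 0 <= x ((k + 1) mod J)%nat).
  assert (Hwalk : forall n, crossing \/ x ((a + n) mod J)%nat <= 0).
  { induction n as [|n [Hc | Hle]].
    - right. now rewrite Nat.add_0_r, Nat.mod_small.
    - now left.
    - destruct (Rle_lt_dec 0 (x (((a + n) mod J + 1) mod J)%nat)) as [Hge | Hlt].
      + left. exists ((a + n) mod J)%nat. split; [apply Nat.mod_upper_bound; lia | auto].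
      + right. rewrite Nat.Div0.add_mod_idemp_l, <- Nat.add_assoc, Nat.add_1_r in Hlt. lra. }
  (* Otherwise [x <= 0] propagates from [a] up to the predecessor of [b]. *)
  destruct (Hwalk (b + J - 1 - a)%nat) as [Hc | Hle]; [exact Hc|].
  exists ((b + J - 1) mod J)%nat. split; [apply Nat.mod_upper_bound; lia|]. split.
  - now replace (a + (b + J - 1 - a))%nat with (b + J - 1)%nat in Hle by lia.
  - rewrite Nat.Div0.add_mod_idemp_l.
    replace (b + J - 1 + 1)%nat with (b + 1 * J)%nat by lia.
    now rewrite Nat.Div0.mod_add, Nat.mod_small.
Qed.

Definition path_energy (n : nat) (y : nat -> R) : R :=
  rsum n (fun i => (y (S i) - y i) ^ 2).

(* The energy of the antiperiodic extension y (j + J) = - y j. *)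
Definition anti_energy (J : nat) (y : nat -> R) : R :=
  path_energy (J - 1) y + (y 0%nat + y (J - 1)%nat) ^ 2.

Lemma cyc_energy_split n x :
  cyc_energy (S n) x = path_energy n x + (x 0%nat - x n) ^ 2.
Proof.
  unfold cyc_energy. cbn [rsum].
  rewrite Nat.add_1_r, Nat.Div0.mod_same. f_equal.
  apply rsum_ext. intros i Hi. rewrite Nat.add_1_r, Nat.mod_small by lia. reflexivity.
Qed.

Lemma cyc_energy_anti J x : (1 <= J)%nat ->
  cyc_energy J x = anti_energy J x - 4 * x 0%nat * x (J - 1)%nat.
Proof.
  intros HJ. destruct J as [|n]; [lia|].
  unfold anti_energy. rewrite cyc_energy_split, Nat.sub_succ, Nat.sub_0_r. ring.
Qed.

Lemma cyc_energy_add_sq J y : (1 <= J)%nat ->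
  cyc_energy J y + (y 0%nat + y (J - 1)%nat) ^ 2
  = anti_energy J y + (y 0%nat - y (J - 1)%nat) ^ 2.
Proof. intros HJ. rewrite cyc_energy_anti by exact HJ. ring. Qed.

(* The eigenvalue of the second difference -Δ on the sequences [sin_seq t phi]. *)
Definition lap_eigval (t : R) : R := 2 * (1 - cos t).

Definition sin_seq (t phi : R) (j : nat) : R := sin (INR j * t + phi).

Section SineSequence.

Variable t : R.

Lemma sin_seq_0 phi : sin_seq t phi 0 = sin phi.
Proof. unfold sin_seq. simpl INR. f_equal. ring. Qed.

Lemma sin_seq_rec phi k :
  sin_seq t phi (S (S k)) = 2 * cos t * sin_seq t phi (S k) - sin_seq t phi k.
Proof.
  unfold sin_seq. rewrite !S_INR.
  replace ((INR k + 1 + 1) * t + phi) with ((INR k + 1) * t + phi + t) by ring.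
  replace (INR k * t + phi) with ((INR k + 1) * t + phi - t) by ring.
  rewrite sin_plus, sin_minus. ring.
Qed.

Lemma sin_seq_cassini phi k :
  sin_seq t phi (S k) ^ 2 - sin_seq t phi k * sin_seq t phi (S (S k)) = sin t ^ 2.
Proof.
  unfold sin_seq. rewrite !S_INR. set (w := (INR k + 1) * t + phi).
  replace ((INR k + 1 + 1) * t + phi) with (w + t) by (unfold w; ring).
  replace (INR k * t + phi) with (w - t) by (unfold w; ring).
  rewrite sin_plus, sin_minus.
  pose proof (sin2_cos2 w) as Hw. pose proof (sin2_cos2 t) as Ht.
  unfold Rsqr in *. nra.
Qed.

Lemma path_energy_sin_seq phi n :
  path_energy n (sin_seq t phi)
  = (1 - cos t) * (2 * sqnorm n (sin_seq t phi) - sin_seq t phi 0 ^ 2 + sin_seq t phi n ^ 2)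
    + sin t / 2 * (sin (2 * (INR n * t + phi)) - sin (2 * phi)).
Proof.
  induction n as [|n IH].
  - unfold path_energy, sqnorm. cbn [rsum]. simpl INR.
    rewrite Rmult_0_l, Rplus_0_l. ring.
  - unfold path_energy, sqnorm in *. cbn [rsum]. rewrite IH.
    unfold sin_seq. rewrite S_INR.
    set (u := INR n * t + phi).
    replace ((INR n + 1) * t + phi) with (u + t) by (unfold u; ring).
    rewrite !sin_2a, (sin_plus u t), (cos_plus u t).
    set (X := sin u). set (Y := cos u). set (c := cos t). set (s := sin t).
    assert (Hsc : s ^ 2 + c ^ 2 = 1).
    { pose proof (sin2_cos2 t) as H. unfold Rsqr in H. unfold s, c. lra. }
    assert (Hdefect :
      ((X * c + Y * s) - X) ^ 2 - (1 - c) * (X ^ 2 + (X * c + Y * s) ^ 2)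
        - s * ((X * c + Y * s) * (Y * c - X * s) - X * Y)
      = (X ^ 2 * c + X * Y * s) * (s ^ 2 + c ^ 2 - 1)) by ring.
    rewrite Hsc in Hdefect. lra.
Qed.

Hypothesis t_pos : 0 < t.

Lemma sin_seq0_pos k : (1 <= k)%nat -> INR k * t < PI -> 0 < sin_seq t 0 k.
Proof.
  intros Hk HkPI. unfold sin_seq. rewrite Rplus_0_r. apply sin_gt_0; auto.
  apply Rmult_lt_0_compat; auto. apply lt_0_INR. lia.
Qed.

(* [sqnorm (S m) y - y 0 ^ 2] is the squared norm over the interior nodes 1..m, so
   this bounds the Dirichlet form of the path 0..S m by its end values. *)
Lemma path_energy_dirichlet_bound m y : INR (S m) * t < PI ->
  (y 0%nat ^ 2 + y (S m) ^ 2) * (sin_seq t 0 (S m) - sin_seq t 0 m)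
    - 2 * y 0%nat * y (S m) * sin t
  <= sin_seq t 0 (S m) * (path_energy (S m) y - lap_eigval t * (sqnorm (S m) y - y 0%nat ^ 2)).
Proof.
  induction m as [|m IH]; intros Hm.
  - unfold path_energy, sqnorm. cbn [rsum].
    rewrite !sin_seq_0, sin_0. unfold sin_seq. simpl INR.
    replace (1 * t + 0) with t by ring. right. ring.
  - assert (Hm' : INR (S m) * t < PI).
    { apply Rle_lt_trans with (2 := Hm). apply Rmult_le_compat_r; [lra|].
      apply le_INR. lia. }
    specialize (IH Hm').
    assert (HB : 0 < sin_seq t 0 (S m)) by (apply sin_seq0_pos; auto; lia).
    assert (HS : 0 < sin_seq t 0 (S (S m))) by (apply sin_seq0_pos; auto; lia).
    pose proof (sin_seq_rec 0 m) as Hrec. pose proof (sin_seq_cassini 0 m) as Hcas.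
    unfold path_energy, sqnorm in *. cbn [rsum] in *.
    set (A := sin_seq t 0 m) in *. set (B := sin_seq t 0 (S m)) in *.
    set (C := sin_seq t 0 (S (S m))) in *.
    set (E := rsum m (fun i => (y (S i) - y i) ^ 2) + (y (S m) - y m) ^ 2
              - lap_eigval t * (rsum m (fun i => y i ^ 2) + y m ^ 2 - y 0%nat ^ 2)) in *.
    set (a := y 0%nat) in *. set (b := y (S m)) in *. set (d := y (S (S m))).
    set (s := sin t) in *. unfold lap_eigval in *. set (c := cos t) in *.
    (* Picone-type identity: the defect of the step is a square plus a multiple of
       the Cassini defect B^2 - A C - s^2 = 0. *)
    assert (Hpicone :
      B * (C * (E + (d - b) ^ 2 - 2 * (1 - c) * b ^ 2)
           - ((a ^ 2 + d ^ 2) * (C - B) - 2 * a * d * s))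
      = C * (B * E - ((a ^ 2 + b ^ 2) * (B - A) - 2 * a * b * s))
        + (C * b - a * s - d * B) ^ 2 + a ^ 2 * (B ^ 2 - A * C - s ^ 2)).
    { rewrite Hrec. ring. }
    assert (Hdefect : 0 <= B * (C * (E + (d - b) ^ 2 - 2 * (1 - c) * b ^ 2)
                                - ((a ^ 2 + d ^ 2) * (C - B) - 2 * a * d * s))).
    { rewrite Hpicone, Hcas. pose proof (pow2_ge_0 (C * b - a * s - d * B)). nra. }
    unfold E in Hdefect. nra.
Qed.

End SineSequence.

Section Antiperiodic.

Variables (J : nat) (t : R).
Hypotheses (HJ : (2 <= J)%nat) (HJt : INR J * t = PI).

Lemma step_pos : 0 < t.
Proof.
  assert (HJpos : 0 < INR J) by (apply lt_0_INR; lia).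
  pose proof PI_RGT_0. nra.
Qed.

Lemma step_lt_PI k : (k < J)%nat -> INR k * t < PI.
Proof.
  intros Hk. rewrite <- HJt. apply Rmult_lt_compat_r; [exact step_pos|].
  apply lt_INR. exact Hk.
Qed.

Lemma step_lt_PI1 : t < PI.
Proof. rewrite <- (Rmult_1_l t). exact (step_lt_PI 1 ltac:(lia)). Qed.

Lemma lap_eigval_pos : 0 < lap_eigval t.
Proof.
  pose proof step_pos. pose proof step_lt_PI1.
  assert (cos t < cos 0) by (apply cos_decreasing_1; lra).
  rewrite cos_0 in *. unfold lap_eigval. lra.
Qed.

Lemma sin_seq0_reflect k : (k <= J)%nat -> sin_seq t 0 (J - k) = sin_seq t 0 k.
Proof.
  intros Hk. unfold sin_seq. rewrite minus_INR, <- sin_PI_x by exact Hk.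
  f_equal. rewrite <- HJt. ring.
Qed.

Lemma sin_seq_antiperiodic phi : sin_seq t phi J = - sin_seq t phi 0.
Proof.
  rewrite sin_seq_0. unfold sin_seq. rewrite HJt, Rplus_comm. apply neg_sin.
Qed.

Lemma sin_seq_half_ends : sin_seq t (t / 2) (J - 1) = sin_seq t (t / 2) 0.
Proof.
  rewrite sin_seq_0. unfold sin_seq. rewrite minus_INR, <- sin_PI_x by lia.
  f_equal. rewrite <- HJt. simpl INR. field.
Qed.

Lemma antiperiodic_poincare y : lap_eigval t * sqnorm J y <= anti_energy J y.
Proof.
  pose proof step_pos as Ht.
  pose proof (path_energy_dirichlet_bound t Ht (J - 2) y) as Hbound.
  replace (S (J - 2)) with (J - 1)%nat in Hbound by lia.
  specialize (Hbound (step_lt_PI (J - 1) ltac:(lia))).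
  rewrite (sin_seq0_reflect 1), (sin_seq0_reflect 2) in Hbound by lia.
  unfold sin_seq in Hbound. simpl INR in Hbound.
  replace (1 * t + 0) with t in Hbound by ring.
  replace ((1 + 1) * t + 0) with (2 * t) in Hbound by ring.
  rewrite sin_2a in Hbound.
  assert (Hs : 0 < sin t) by (apply sin_gt_0; [exact Ht | exact step_lt_PI1]).
  assert (HsqJ : sqnorm J y = sqnorm (J - 1) y + y (J - 1)%nat ^ 2).
  { unfold sqnorm. replace J with (S (J - 1)) at 1 by lia. reflexivity. }
  rewrite HsqJ. unfold anti_energy. unfold lap_eigval in *.
  set (P := path_energy (J - 1) y) in *. set (r := sqnorm (J - 1) y) in *.
  set (a := y 0%nat) in *. set (b := y (J - 1)%nat) in *.
  set (s := sin t) in *. set (c := cos t) in *.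
  assert (Hform : (a ^ 2 + b ^ 2) * (1 - 2 * c) - 2 * a * b <= P - 2 * (1 - c) * (r - a ^ 2)).
  { apply (Rmult_le_reg_l s); [exact Hs|]. nra. }
  nra.
Qed.

Lemma anti_energy_sin_seq phi :
  anti_energy J (sin_seq t phi) = lap_eigval t * sqnorm J (sin_seq t phi).
Proof.
  set (f := sin_seq t phi).
  assert (Hpath : anti_energy J f = path_energy J f).
  { unfold anti_energy, path_energy. replace J with (S (J - 1)) at 3 by lia. cbn [rsum].
    replace (S (J - 1)) with J by lia.
    unfold f. rewrite sin_seq_antiperiodic. ring. }
  rewrite Hpath. unfold f. rewrite path_energy_sin_seq, sin_seq_antiperiodic, HJt.
  replace (2 * (PI + phi)) with (2 * phi + 2 * PI) by ring.
  rewrite sin_plus, sin_2PI, cos_2PI. unfold lap_eigval. ring.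
Qed.

Lemma cyc_energy_ge_of_sign_change x : min_le0_le_max J x ->
  lap_eigval t * sqnorm J x <= cyc_energy J x.
Proof.
  intros Hx. destruct (sign_change_exists J x Hx) as [k [Hk [Hxk Hxk1]]].
  assert (HJ0 : (J <> 0)%nat) by lia.
  set (y := fun i => x ((i + (k + 1)) mod J)%nat).
  rewrite <- (sqnorm_rotate J x (k + 1) HJ0), <- (cyc_energy_rotate J x (k + 1) HJ0).
  fold y. rewrite cyc_energy_anti by lia.
  assert (Hy0 : y 0%nat = x ((k + 1) mod J)%nat) by reflexivity.
  assert (HyJ : y (J - 1)%nat = x k).
  { unfold y. replace (J - 1 + (k + 1))%nat with (k + 1 * J)%nat by lia.
    rewrite Nat.Div0.mod_add, Nat.mod_small; auto. }
  pose proof (antiperiodic_poincare y). rewrite Hy0, HyJ. nra.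
Qed.

End Antiperiodic.

Lemma is_max_over_ratio (P : (nat -> R) -> Prop) (N D : (nat -> R) -> R) (l : R) :
  0 < l ->
  (forall x, P x -> 0 < N x) ->
  (forall x, P x -> l * N x <= D x) ->
  (exists x, P x /\ D x = l * N x) ->
  is_max_over P (fun x => N x / D x) (1 / l).
Proof.
  intros Hl HN HD [x0 [Hx0 HDx0]]. split.
  - exists x0. split; [exact Hx0|]. rewrite HDx0.
    pose proof (HN x0 Hx0). field. split; lra.
  - intros x Hx. specialize (HN x Hx). specialize (HD x Hx).
    assert (HDpos : 0 < D x) by (pose proof (Rmult_lt_0_compat l (N x) Hl HN); lra).
    apply Rmult_le_reg_r with (D x * l); [apply Rmult_lt_0_compat; lra|].
    replace (N x / D x * (D x * l)) with (l * N x) by (field; lra).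
    replace (1 / l * (D x * l)) with (D x) by (field; lra). exact HD.
Qed.

Theorem lemma4p1 (J : nat) (HJ : (2 <= J)%nat) :
  is_max_over (fun x => nonzero_vec J x /\ min_le0_le_max J x)
              (fun x => sqnorm J x / cyc_energy J x)
              (1 / (2 * (1 - cos (PI / INR J))))
  /\
  is_max_over (fun y => nonzero_vec J y)
              (fun y => sqnorm J y / (cyc_energy J y + (y 0%nat + y (J - 1)%nat)^2))
              (1 / (2 * (1 - cos (PI / INR J)))).
Proof.
  set (t := PI / INR J). change (2 * (1 - cos t)) with (lap_eigval t).
  assert (HJt : INR J * t = PI) by (unfold t; field; apply not_0_INR; lia).
  pose proof (lap_eigval_pos J t HJ HJt) as Hl.
  pose proof (step_pos J t HJ HJt) as Ht.
  split; apply is_max_over_ratio; auto.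
  - intros x [Hx _]. exact (sqnorm_pos J x Hx).
  - intros x [_ Hx]. exact (cyc_energy_ge_of_sign_change J t HJ HJt x Hx).
  - exists (sin_seq t 0). rewrite cyc_energy_anti, sin_seq_0, sin_0 by lia.
    assert (Hx1 : 0 < sin_seq t 0 1)
      by exact (sin_seq0_pos t Ht 1 (le_n 1) (step_lt_PI J t HJ HJt 1 ltac:(lia))).
    split; [split|].
    + exists 1%nat. split; [lia | lra].
    + split; exists 0%nat; rewrite sin_seq_0, sin_0; split; lia || lra.
    + rewrite anti_energy_sin_seq by auto. ring.
  - intros y Hy. exact (sqnorm_pos J y Hy).
  - intros y _. rewrite cyc_energy_add_sq by lia.
    pose proof (antiperiodic_poincare J t HJ HJt y).
    pose proof (pow2_ge_0 (y 0%nat - y (J - 1)%nat)). lra.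
  - exists (sin_seq t (t / 2)).
    rewrite cyc_energy_add_sq, sin_seq_half_ends, anti_energy_sin_seq by (auto || lia).
    assert (Hy0 : 0 < sin_seq t (t / 2) 0).
    { rewrite sin_seq_0. apply sin_gt_0; [lra|].
      pose proof (step_lt_PI1 J t HJ HJt). lra. }
    split; [exists 0%nat; split; [lia | lra] | ring].
Qed.
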